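(* Let $\mathcal H$ be a Berge-$C_4$-free hypergraph (multi-hyperedges allowed), and let $H$ be a colored graph on the vertex set of $\mathcal H$ obtained as follows: for each hyperedge $h\in\mathcal H$ with $|h|\ge 4$, one places $|h|-3$ edges on vertices of $h$ such that the set of edges placed in $h$ forms a collection of pairwise vertex-disjoint triangles and single edges, and each edge placed in $h$ receives color $h$ (each edge of $H$ has exactly one color). Let $v$ be any vertex of $H$, let $d(v)$ be its degree in $H$, let $N_1(v)=\{x : vx\in E(H)\}$ and $N_2(v)=\{y\notin N_1(v)\cup\{v\} : \exists x\in N_1(v) \text{ with } xy\in E(H)\}$. Let $G=H[N_1(v)]$ be the subgraph of $H$ induced by $N_1(v)$. Let $G_{aux}$ be the graph on vertex set $N_1(v)$ in which $x\neq y$ are adjacent if and only if there exists $w\in N_2(v)$ with $wx,wy\in E(H)$, and let $G'_{aux}$ be the graph on $N_1(v)$ whose edge set is $E(G_{aux})\setminus E(G)$. Then the number of edges of $G'_{aux}$ satisfies $$|E(G'_{aux})| < d(v)^{9/5}.$$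
   Context: A Berge cycle of length $k$ in a hypergraph is an alternating sequence $v_1,h_1,\ldots,v_k,h_k$ of distinct vertices and distinct hyperedges with $v_i,v_{i+1}\in h_i$ for $1\le i\le k-1$ and $v_k,v_1\in h_k$; Berge-$C_4$-free means no such sequence with $k=4$ exists. In $H$, an edge $xy$ ''has color $h$'' if it was placed inside hyperedge $h$. $xy$ denotes the pair $\{x,y\}$. *)

From HB Require Import structures.
From mathcomp Require Import all_boot all_order all_algebra.
From mathcomp Require Import reals exp.
Set Implicit Arguments. Unset Strict Implicit. Unset Printing Implicit Defensive.

Section Defs.
Variables (V E : finType).

(* A hypergraph on V with hyperedges indexed by E (multi-hyperedges allowed:
   distinct indices may carry the same vertex set). *)

Definition berge_C4_free (hE : E -> {set V}) : Prop :=
  forall (v1 v2 v3 v4 : V) (h1 h2 h3 h4 : E),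
    uniq [:: v1; v2; v3; v4] -> uniq [:: h1; h2; h3; h4] ->
    ~ [/\ v1 \in hE h1 /\ v2 \in hE h1, v2 \in hE h2 /\ v3 \in hE h2,
          v3 \in hE h3 /\ v4 \in hE h3 & v4 \in hE h4 /\ v1 \in hE h4].

(* P h = the set of edges (2-element vertex sets) placed inside hyperedge h,
   i.e. the edges of color h. *)
Definition valid_placement (hE : E -> {set V}) (P : E -> {set {set V}}) : Prop :=
  [/\ forall h, (4 <= #|hE h| -> #|P h| = #|hE h| - 3) /\
                (#|hE h| < 4 -> P h = set0),
      forall h, exists S : {set {set V}},
        [/\ forall s, s \in S -> s \subset hE h /\ (#|s| = 2 \/ #|s| = 3),
            forall s t, s \in S -> t \in S -> s != t -> [disjoint s & t] &
            P h = [set e : {set V} | (#|e| == 2) && [exists s in S, e \subset s]]]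
    & forall h1 h2 e, e \in P h1 -> e \in P h2 -> h1 = h2].

Definition Hedges (P : E -> {set {set V}}) : {set {set V}} := \bigcup_(h : E) P h.

Variable EH : {set {set V}}.

Definition N1 (v : V) : {set V} := [set x | [set v; x] \in EH].

Definition N2 (v : V) : {set V} :=
  [set y | (y \notin N1 v) && (y != v) && [exists x in N1 v, [set x; y] \in EH]].

Definition G_edges (v : V) : {set {set V}} :=
  [set e in EH | e \subset N1 v].

Definition Gaux_edges (v : V) : {set {set V}} :=
  [set [set x; y] | x in N1 v, y in N1 v &
     (x != y) && [exists w in N2 v, ([set w; x] \in EH) && ([set w; y] \in EH)]].

Definition Gaux'_edges (v : V) : {set {set V}} := Gaux_edges v :\: G_edges v.

End Defs.

(* Fix v, let N = N1(v) and d = |N|.  Call (x, y) with x, y in N an arc if y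
   lies in the hyperedge h coloring vx while vy does not have color h.  If x, y
   in N have a common neighbour w in N2(v) but xy is not an edge, the colors of
   vx, xw, wy, yv form a Berge C4 on v, x, w, y unless two of them coincide, and
   the only coincidences left possible make (x, y) or (y, x) an arc; so
   |E(G'_aux)| is at most the number J of arcs.  Let K(y) be the in-degree of y.
   Two vertices x, x' with differently colored vx, vx' have at most two common
   out-neighbours (three would close a Berge C4 through v, or put three edges
   of one color class at v), and as color classes are disjoint triangles and
   edges, vx shares its color with at most one other vx'.  Hence
   sum K(y)^2 <= 2J + 2d(d-1), and Cauchy-Schwarz gives J^2 <= d (2J + 2d(d-1)),
   i.e. J = O(d^(3/2)).  For small d the trivial bound
   |E(G'_aux)| <= d(d-1)/2 suffices. *)

From mathcomp Require Import all_boot all_order all_algebra.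
From mathcomp Require Import reals exp.
From mathcomp Require Import zify.
Import Order.TTheory GRing.Theory Num.Theory.
Set Implicit Arguments. Unset Strict Implicit. Unset Printing Implicit Defensive.

Lemma pred_pow5_lt (d : nat) : 0 < d <= 36 -> (d - 1) ^ 5 < 32 * d ^ 4.
Proof.
case/andP=> d_gt0 d_le36.
have e_le : (d - 1) ^ 5 <= 35 * (d - 1) ^ 4.
  by rewrite expnS leq_mul2r; apply/orP; right; lia.
have e_le' : (36 * (d - 1)) ^ 4 <= (35 * d) ^ 4 by rewrite leq_exp2r //; lia.
have d4_gt0 : 0 < d ^ 4 by rewrite expn_gt0 d_gt0.
rewrite !expnMn in e_le'.
move: e_le e_le' d4_gt0; move: ((d - 1) ^ 5) ((d - 1) ^ 4) (d ^ 4) => e5 e4 d4; lia.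
Qed.

Lemma sqr_lt_cube (J d : nat) : 37 <= d ->
  J * J <= d * (2 * J + 2 * (d * (d - 1))) -> J * J < 3 * d ^ 3.
Proof.
move=> d_ge37 hJ; rewrite ltnNge; apply/negP => hJ3.
have d3 : d ^ 3 = d * (d * d) by rewrite !expnS expn0 muln1.
rewrite d3 in hJ3.
have J_le : J <= 6 * d by nia.
have dd_le : d * d <= 2 * J by nia.
nia.
Qed.

Lemma pow5_lt_pow9 (g J d : nat) : 0 < d -> g <= J -> 2 * g <= d * (d - 1) ->
  J * J <= d * (2 * J + 2 * (d * (d - 1))) -> g ^ 5 < d ^ 9.
Proof.
move=> d_gt0 g_le_J g_le_pairs hJ.
have [d_le36 | d_gt36] := leqP d 36.
  have hd : (d - 1) ^ 5 < 32 * d ^ 4 by apply: pred_pow5_lt; rewrite d_gt0.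
  have hg : (2 * g) ^ 5 <= (d * (d - 1)) ^ 5 by rewrite leq_exp2r.
  rewrite !expnMn in hg.
  have -> : d ^ 9 = d ^ 5 * d ^ 4 by rewrite -expnD.
  have d5_gt0 : 0 < d ^ 5 by rewrite expn_gt0 d_gt0.
  move: hg hd d5_gt0; move: (g ^ 5) ((d - 1) ^ 5) (d ^ 4) (d ^ 5) => g5 e5 d4 d5.
  rewrite (_ : 2 ^ 5 = 32) //; nia.
have hg : g * g < 3 * d ^ 3.
  by apply: leq_ltn_trans (sqr_lt_cube d_gt36 hJ); apply: leq_mul.
have d3 : 3 ^ 5 <= d ^ 3 by apply: leq_trans (_ : 7 ^ 3 <= _); rewrite ?leq_exp2r //; lia.
have h18 : (g * g) ^ 5 < d ^ 18.
  apply: leq_trans (_ : (3 * d ^ 3) ^ 5 <= _); first by rewrite ltn_exp2r.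
  by rewrite expnMn -expnM (_ : 18 = 3 + 3 * 5) // expnD leq_mul2r d3 orbT.
by rewrite -(ltn_exp2r _ _ (isT : 0 < 2)) expnS expn1 -expnMn -expnM.
Qed.

Lemma sum_mem_card (T : finType) (A : {pred T}) : \sum_(x : T) (x \in A : nat) = #|A|.
Proof. by rewrite -sum1_card [RHS]big_mkcond; apply: eq_bigr => x _; case: (x \in A). Qed.

Lemma sqr_sum_le_card_sum_sqr (T : finType) (A : {pred T}) (F : T -> nat) :
  (\sum_(y in A) F y) ^ 2 <= #|A| * \sum_(y in A) F y ^ 2.
Proof.
rewrite -(leq_pmul2l (isT : 0 < 2)) expnS expn1 big_distrl /=.
have -> : \sum_(y in A) F y * \sum_(z in A) F z = \sum_(y in A) \sum_(z in A) F y * F z.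
  by apply: eq_bigr => y _; rewrite big_distrr.
rewrite big_distrr /=.
apply: leq_trans (_ : \sum_(y in A) \sum_(z in A) (F y ^ 2 + F z ^ 2) <= _).
  by apply: leq_sum => y _; rewrite big_distrr; apply: leq_sum => z _; apply: (nat_Cauchy _ _).1.
under eq_bigr do rewrite big_split /= sum_nat_const.
rewrite big_split /= sum_nat_const -big_distrr /=; lia.
Qed.

Lemma card_set_sum (T : finType) (p : pred T) : #|[set x | p x]| = \sum_(x : T) (p x : nat).
Proof. by rewrite -sum_mem_card; apply: eq_bigr => x _; rewrite inE. Qed.

Section PreimageCounting.
Variables (T : finType) (r : rel T).

Lemma card_rel_sum_preim : #|[set p : T * T | r p.1 p.2]| = \sum_(y : T) #|[set x | r x y]|.
Proof.
rewrite card_set_sum -(pair_bigA _ (fun x y => (r x y : nat))) exchange_big /=.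
by apply: eq_bigr => y _; rewrite card_set_sum.
Qed.

Lemma sum_card_preimE :
  \sum_(y : T) #|[set x | r x y]| = \sum_(x : T) #|[set y | r x y]|.
Proof.
under eq_bigr do rewrite card_set_sum.
by rewrite exchange_big; apply: eq_bigr => x _; rewrite card_set_sum.
Qed.

Lemma sum_sqr_card_preim :
  \sum_(y : T) #|[set x | r x y]| ^ 2 =
  \sum_(x : T) \sum_(x' : T) #|[set y | r x y && r x' y]|.
Proof.
under eq_bigr do rewrite card_set_sum expnS expn1 big_distrl /=.
under [RHS]eq_bigr do under eq_bigr do rewrite card_set_sum.
rewrite exchange_big /=; apply: eq_bigr => x _.
under eq_bigr do rewrite big_distrr /=.
by rewrite exchange_big /=; apply: eq_bigr => x' _; apply: eq_bigr => y _; rewrite mulnb.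
Qed.

End PreimageCounting.

Lemma card_Gaux'_le_pairs (V : finType) (EH : {set {set V}}) (v : V) :
  2 * #|Gaux'_edges EH v| <= #|N1 EH v| * (#|N1 EH v| - 1).
Proof.
have sub : Gaux'_edges EH v \subset [set A : {set V} | A \subset N1 EH v & #|A| == 2].
  apply/subsetP => e; rewrite inE => /andP[_ /imset2P[x y xN]].
  rewrite inE => /andP[yN /andP[xy _]] ->.
  by rewrite inE cards2 xy andbT subUset !sub1set xN yN.
have := subset_leq_card sub; rewrite cards_draws bin2 => h.
apply: leq_trans (_ : ((#|N1 EH v| * #|N1 EH v|.-1)./2).*2 <= _).
  by rewrite mul2n leq_double.
rewrite halfK; lia.
Qed.

Section CliquePieces.
Variables (V : finType) (S : {set {set V}}).
Hypothesis S_disjoint : forall s t, s \in S -> t \in S -> s != t -> [disjoint s & t].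

Definition piece_edges : {set {set V}} :=
  [set e : {set V} | (#|e| == 2) && [exists s in S, e \subset s]].

Lemma piece_uniq a s t : s \in S -> t \in S -> a \in s -> a \in t -> s = t.
Proof.
move=> sS tS a_s a_t; apply/eqP; apply: contraTT a_t => st.
by rewrite (disjointFr (S_disjoint sS tS st) a_s).
Qed.

Lemma piece_edge_neq a b : [set a; b] \in piece_edges -> a != b.
Proof. by rewrite inE cards2 => /andP[]; case: (a != b). Qed.

Lemma piece_edgeP a b :
  [set a; b] \in piece_edges -> exists2 s, s \in S & (a \in s) && (b \in s).
Proof.
by rewrite inE => /andP[_ /exists_inP[s sS]]; rewrite subUset !sub1set; exists s.
Qed.

Lemma piece_edges_triangle a b c : [set a; b] \in piece_edges ->
  [set a; c] \in piece_edges -> b != c -> [set b; c] \in piece_edges.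
Proof.
move=> /piece_edgeP[s sS /andP[a_s b_s]] /piece_edgeP[t tS /andP[a_t c_t]] bc.
rewrite (piece_uniq tS sS a_t a_s) in c_t.
by rewrite inE cards2 bc; apply/exists_inP; exists s; rewrite // subUset !sub1set b_s.
Qed.

Lemma piece_edges_no_claw a b c e :
  (forall s, s \in S -> #|s| <= 3) ->
  [set a; b] \in piece_edges -> [set a; c] \in piece_edges -> [set a; e] \in piece_edges ->
  uniq [:: b; c; e] -> False.
Proof.
move=> S_small ab ac ae u.
move: (piece_edge_neq ab) (piece_edge_neq ac) (piece_edge_neq ae) => ne_ab ne_ac ne_ae.
case/piece_edgeP: ab => s sS /andP[a_s b_s].
case/piece_edgeP: ac => t tS /andP[a_t c_t]; rewrite (piece_uniq tS sS a_t a_s) in c_t.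
case/piece_edgeP: ae => w wS /andP[a_w e_w]; rewrite (piece_uniq wS sS a_w a_s) in e_w.
have u4 : uniq [:: a; b; c; e] by rewrite cons_uniq u andbT !inE !negb_or ne_ab ne_ac ne_ae.
have : 4 <= #|s|.
  rewrite -[4]/(size [:: a; b; c; e]) -(card_uniqP u4); apply/subset_leq_card/subsetP => z.
  by rewrite !inE => /or4P[] /eqP ->.
by rewrite leqNgt ltnS S_small.
Qed.

End CliquePieces.

Section Placement.
Variables (V E : finType) (hE : E -> {set V}) (P : E -> {set {set V}}).
Hypothesis hP : valid_placement hE P.

Lemma placement_pieces h : exists S : {set {set V}},
  [/\ forall s t, s \in S -> t \in S -> s != t -> [disjoint s & t],
      forall s, s \in S -> #|s| <= 3,
      forall s, s \in S -> s \subset hE h &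
      P h = piece_edges S].
Proof.
case: hP => _ /(_ h)[S [S_sub S_disj ->]] _.
by exists S; split=> // [s /S_sub[_ [] ->] | s /S_sub[]].
Qed.

Lemma placed_color_uniq e h1 h2 : e \in P h1 -> e \in P h2 -> h1 = h2.
Proof. by case: hP => _ _; apply. Qed.

Lemma placed_neq h a b : [set a; b] \in P h -> a != b.
Proof. by have [S [_ _ _ ->]] := placement_pieces h; apply: piece_edge_neq. Qed.

Lemma placed_mem h a b : [set a; b] \in P h -> (a \in hE h) && (b \in hE h).
Proof.
have [S [_ _ S_sub ->]] := placement_pieces h.
by case/piece_edgeP=> s /S_sub/subsetP s_sub /andP[/s_sub -> /s_sub ->].
Qed.

Lemma placed_triangle h a b c :
  [set a; b] \in P h -> [set a; c] \in P h -> b != c -> [set b; c] \in P h.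
Proof. by have [S [S_disj _ _ ->]] := placement_pieces h; apply: piece_edges_triangle. Qed.

Lemma placed_no_claw h a b c e :
  [set a; b] \in P h -> [set a; c] \in P h -> [set a; e] \in P h ->
  uniq [:: b; c; e] -> False.
Proof. by have [S [S_disj S_small _ ->]] := placement_pieces h; apply: piece_edges_no_claw. Qed.

Lemma mem_HedgesP e : reflect (exists h, e \in P h) (e \in Hedges P).
Proof. by apply: (iffP bigcupP) => [[h _]|[h]]; exists h. Qed.

Lemma placed_color_neq h h' a b c : [set a; b] \in P h -> [set a; c] \in P h' ->
  b != c -> [set b; c] \notin Hedges P -> h != h'.
Proof.
move=> ab ac bc; apply: contra => /eqP hh'; rewrite -hh' in ac.
by apply/mem_HedgesP; exists h; apply: placed_triangle ab ac bc.
Qed.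

End Placement.

Section Neighbourhood.
Variables (V E : finType) (hE : E -> {set V}) (P : E -> {set {set V}}) (v : V).
Hypotheses (hC4 : berge_C4_free hE) (hP : valid_placement hE P).
Local Notation N := (N1 (Hedges P) v).

Lemma in_N1P x : reflect (exists h, [set v; x] \in P h) (x \in N).
Proof. by rewrite inE; apply: mem_HedgesP. Qed.

Definition color_arc x y := [&& x \in N, y \in N &
  [exists h, [&& [set v; x] \in P h, y \in hE h & [set v; y] \notin P h]]].

Lemma indeg_eq0 y : y \notin N -> #|[set x | color_arc x y]| = 0.
Proof.
move=> yN; apply/eqP; rewrite cards_eq0; apply/eqP/setP => x.
by rewrite !inE /color_arc (negbTE yN) andbF.
Qed.

Lemma color_arc_hyperedge x y h : [set v; x] \in P h -> color_arc x y ->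
  y \in hE h /\ forall g, [set v; y] \in P g -> g != h.
Proof.
move=> vxh /and3P[_ _ /existsP[h' /and3P[vxh' yh' vy_notP]]].
rewrite (placed_color_uniq hP vxh vxh'); split=> // g vyg.
by apply: contraNneq vy_notP => <-.
Qed.

Lemma Gaux'_edge_arc e :
  e \in Gaux'_edges (Hedges P) v -> exists x y, e = [set x; y] /\ color_arc x y.
Proof.
rewrite inE => /andP[e_notG /imset2P[x y xN]].
rewrite inE => /andP[yN /andP[xy /exists_inP[w wN2 /andP[wx wy]]]] e_def; subst e.
have xy_notH : [set x; y] \notin Hedges P.
  by apply: contra e_notG => xyH; rewrite /G_edges inE xyH subUset !sub1set xN yN.
move: wN2; rewrite inE => /andP[/andP[wN wv] _].
have vw_notH : [set v; w] \notin Hedges P by move: wN; rewrite inE.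
(* a, b, b', a' are the colors of vx, xw, wy, yv. *)
case/in_N1P: (xN) => a vxa; case/in_N1P: (yN) => a' vya'.
case/mem_HedgesP: wx => b wxb; case/mem_HedgesP: wy => b' wyb'.
have aa' := placed_color_neq hP vxa vya' xy xy_notH.
have bb' := placed_color_neq hP wxb wyb' xy xy_notH.
have vw : v != w by rewrite eq_sym.
have ab : a != b by apply: (placed_color_neq hP (a := x) _ _ vw vw_notH); rewrite setUC.
have a'b' : a' != b' by apply: (placed_color_neq hP (a := y) _ _ vw vw_notH); rewrite setUC.
have /andP[va xa] := placed_mem hP vxa; have /andP[va' ya'] := placed_mem hP vya'.
have /andP[wb xb] := placed_mem hP wxb; have /andP[wb' yb'] := placed_mem hP wyb'.
have [ab'|ab'] := eqVneq a b'.
  subst b'; exists x, y; split=> //; apply/and3P; split=> //; apply/existsP; exists a.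
  rewrite vxa yb' /=; apply: contra aa' => vya.
  by rewrite (placed_color_uniq hP vya vya').
have [ba'|ba'] := eqVneq b a'.
  subst a'; exists y, x; split; first by rewrite setUC.
  apply/and3P; split=> //; apply/existsP; exists b.
  rewrite vya' xb /=; apply: contra aa' => vxb.
  by rewrite (placed_color_uniq hP vxa vxb).
have xw : x != w by apply: contraNneq wN => <-.
have wy : w != y by apply: contraNneq wN => ->.
have u_v : uniq [:: v; x; w; y].
  by rewrite /= !inE !negb_or (placed_neq hP vxa) (placed_neq hP vya') vw xy xw wy.
have u_h : uniq [:: a; b; b'; a'] by rewrite /= !inE !negb_or ab ab' aa' bb' ba' eq_sym a'b'.
by case: (hC4 u_v u_h); split; split.
Qed.

Lemma card_Gaux'_le_arcs : #|Gaux'_edges (Hedges P) v| <= \sum_y #|[set x | color_arc x y]|.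
Proof.
rewrite -card_rel_sum_preim.
have sub : Gaux'_edges (Hedges P) v \subset
    (fun p : V * V => [set p.1; p.2]) @: [set p | color_arc p.1 p.2].
  apply/subsetP => e /Gaux'_edge_arc[x [y [-> xy]]].
  by apply/imsetP; exists (x, y); rewrite ?inE.
exact: leq_trans (subset_leq_card sub) (leq_imset_card _ _).
Qed.

Lemma card_color_nbhd h : #|[set x | [set v; x] \in P h]| <= 2.
Proof.
rewrite leqNgt; apply/card_gt2P => -[x1 [x2 [x3 [[i1 i2 i3] [n12 n23 n31]]]]].
rewrite !inE in i1 i2 i3; apply: (placed_no_claw hP i1 i2 i3).
by rewrite /= !inE !negb_or n12 n23 eq_sym n31.
Qed.

Lemma card_common_out_arcs x x' h h' : [set v; x] \in P h -> [set v; x'] \in P h' ->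
  h != h' -> #|[set y | color_arc x y && color_arc x' y]| <= 2.
Proof.
move=> vxh vx'h' hh'.
have common y : color_arc x y && color_arc x' y -> exists2 g, [set v; y] \in P g &
    [/\ g != h, g != h', y \in hE h & y \in hE h'].
  case/andP=> xy /(color_arc_hyperedge vx'h')[yh' gh'].
  case/(color_arc_hyperedge vxh): (xy) => yh gh.
  case/and3P: xy => _ /in_N1P[g vyg] _.
  by exists g; rewrite // gh // gh'.
have C4 y1 y2 y3 g1 g2 g3 : [set v; y1] \in P g1 -> [set v; y2] \in P g2 ->
    [set v; y3] \in P g3 -> [/\ g1 != h, g1 != h', y1 \in hE h & y1 \in hE h'] ->
    [/\ g2 != h, g2 != h', y2 \in hE h & y2 \in hE h'] ->
    [/\ g3 != h, g3 != h', y3 \in hE h & y3 \in hE h'] ->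
    g1 != g3 -> uniq [:: y1; y2; y3] -> False.
  move=> vy1 vy2 vy3 [g1h g1h' y1h _] [_ _ y2h y2h'] [g3h g3h' _ y3h'] g13 u.
  have u_v : uniq [:: v; y1; y2; y3].
    rewrite cons_uniq u andbT !inE !negb_or.
    by rewrite (placed_neq hP vy1) (placed_neq hP vy2) (placed_neq hP vy3).
  have u_h : uniq [:: g1; h; h'; g3].
    by rewrite /= !inE !negb_or g1h g1h' g13 hh' (eq_sym h) g3h (eq_sym h') g3h'.
  have /andP[vg1 y1g1] := placed_mem hP vy1; have /andP[vg3 y3g3] := placed_mem hP vy3.
  by case: (hC4 u_v u_h); split; split.
rewrite leqNgt; apply/card_gt2P => -[y1 [y2 [y3 [[i1 i2 i3] [n12 n23 n31]]]]].
rewrite !inE in i1 i2 i3.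
case/common: i1 => g1 vy1 c1; case/common: i2 => g2 vy2 c2; case/common: i3 => g3 vy3 c3.
have [g12|g12] := eqVneq g1 g2; last first.
  by apply: (C4 y1 y3 y2 g1 g3 g2) => //; rewrite /= !inE !negb_or eq_sym n31 n12 eq_sym n23.
subst g2; have [g13|g13] := eqVneq g1 g3; last first.
  by apply: (C4 y1 y2 y3 g1 g1 g3) => //; rewrite /= !inE !negb_or n12 eq_sym n31 n23.
subst g3; by apply: (placed_no_claw hP vy1 vy2 vy3); rewrite /= !inE !negb_or n12 eq_sym n31 n23.
Qed.

Lemma sum_common_out_arcs x :
  \sum_x' #|[set y | color_arc x y && color_arc x' y]| <=
  2 * #|[set y | color_arc x y]| + (x \in N) * (2 * (#|N| - 1)).
Proof.
have [xN | xNN] := boolP (x \in N); last first.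
  rewrite big1 // => x' _; apply/eqP; rewrite cards_eq0; apply/eqP/setP => y.
  by rewrite !inE /color_arc (negbTE xNN).
case/in_N1P: (xN) => h vxh.
have term x' : #|[set y | color_arc x y && color_arc x' y]| <=
    2 * (x' \in N :\ x) + ([set v; x'] \in P h) * #|[set y | color_arc x y]|.
  have [vx'h | vx'_notP] := boolP ([set v; x'] \in P h).
    apply: leq_trans (leq_addl _ _); rewrite mul1n.
    by apply/subset_leq_card/subsetP => y; rewrite !inE => /andP[].
  have [x'N | x'NN] := boolP (x' \in N); last first.
    rewrite (_ : [set y | _] = set0) ?cards0 //; apply/setP => y.
    by rewrite !inE /color_arc (negbTE x'NN) andbF.
  have [x'x | x'x] := eqVneq x' x; first by rewrite x'x vxh in vx'_notP.
  rewrite in_setD1 x'x x'N addn0; case/in_N1P: x'N => h' vx'h'.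
  by apply: (card_common_out_arcs vxh vx'h'); apply: contraNneq vx'_notP => ->.
apply: leq_trans (leq_sum _ (fun x' _ => term x')) _.
rewrite big_split /= -big_distrr -big_distrl /= sum_mem_card -card_set_sum.
have := card_color_nbhd h; have := cardsD1 x N; rewrite xN.
move: #|[set _ | _ \in _]| #|[set y | color_arc x y]| => c k; nia.
Qed.

Lemma sum_sqr_indeg : \sum_y #|[set x | color_arc x y]| ^ 2 <=
  2 * \sum_y #|[set x | color_arc x y]| + 2 * (#|N| * (#|N| - 1)).
Proof.
rewrite sum_sqr_card_preim sum_card_preimE.
apply: leq_trans (leq_sum _ (fun x _ => sum_common_out_arcs x)) _.
by rewrite big_split /= -big_distrr -big_distrl /= sum_mem_card mulnCA.
Qed.

End Neighbourhood.

Local Open Scope ring_scope.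

Lemma ltr_nat_powR (R : realType) (g d m n : nat) : (0 < n)%N -> (g ^ n < d ^ m)%N ->
  (g%:R : R) < (d%:R : R) `^ (m%:R / n%:R).
Proof.
move=> n_gt0 hgd; rewrite ltNge; apply/negP => hdg.
have : (d%:R `^ (m%:R / n%:R)) ^+ n <= (g%:R : R) ^+ n.
  by rewrite lerXn2r // ?nnegrE ?powR_ge0.
rewrite -powR_mulrn ?powR_ge0 // -powRrM divfK ?pnatr_eq0 -?lt0n //.
by rewrite powR_mulrn // -!natrX ler_nat leqNgt hgd.
Qed.

Theorem lemma2 (V E : finType) (hE : E -> {set V}) (P : E -> {set {set V}})
    (v : V) (R : realType) :
  berge_C4_free hE -> valid_placement hE P ->
  (0 < #|N1 (Hedges P) v|)%N ->
  (#|Gaux'_edges (Hedges P) v|%:R : R) <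
    (#|N1 (Hedges P) v|%:R : R) `^ (9%:R / 5%:R).
Proof.
move=> hC4 hP d_gt0; apply: ltr_nat_powR => //.
set N := N1 (Hedges P) v; pose K y := #|[set x | color_arc hE P v x y]|.
pose J := (\sum_(y in N) K y)%N.
have J_all : J = (\sum_y K y)%N by rewrite /J big_rmcond // => y; apply: indeg_eq0.
apply: (pow5_lt_pow9 (J := J)) => //.
- by rewrite J_all; apply: card_Gaux'_le_arcs.
- exact: card_Gaux'_le_pairs.
apply: leq_trans (_ : #|N| * (\sum_(y in N) K y ^ 2) <= _)%N.
  by rewrite mulnn; apply: sqr_sum_le_card_sum_sqr.
rewrite leq_mul2l J_all big_rmcond => [|y /indeg_eq0 K0]; last by rewrite /K K0.
by rewrite (sum_sqr_indeg v hC4 hP) orbT.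
Qed.
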